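(* Let $d\ge1$, let $Z$ be a simple $d$-cycle, and let $s\ge1$. Deleting any $s$ vertices from the facet graph $G_d(Z)$ leaves a graph with at most $s$ connected components.
   Context: Fix a field $\mathbb F$. A $d$-simplex is a $(d+1)$-element subset of $[n]$ oriented by increasing order $s_1<\dots<s_{d+1}$. A $d$-chain is a formal $\mathbb F$-combination of $d$-simplices with support the set of simplices with nonzero coefficient; $\partial\sigma=\sum_i(-1)^{i-1}(\sigma\setminus\{s_i\})$, extended linearly. A $d$-cycle is a chain with $\partial Z=0$; it is simple if $Z\ne0$ and every $d$-cycle supported in $\mathrm{Supp}(Z)$ is a scalar multiple of $Z$. The facet graph $G_d(Z)$ has vertex set $\mathrm{Supp}(Z)$, two $d$-simplices adjacent iff they share a $(d-1)$-face. *)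

From HB Require Import structures.
From mathcomp Require Import all_boot all_order all_algebra.
Set Implicit Arguments. Unset Strict Implicit. Unset Printing Implicit Defensive.
Import GRing.Theory.
Local Open Scope ring_scope.

Definition chain (n : nat) (F : fieldType) := {ffun {set 'I_n} -> F}.

Definition is_dchain (n d : nat) (F : fieldType) (Z : chain n F) : Prop :=
  forall sigma : {set 'I_n}, Z sigma != 0 -> #|sigma| = d.+1.

Definition Supp (n : nat) (F : fieldType) (Z : chain n F) : {set {set 'I_n}} :=
  [set sigma | Z sigma != 0].

(* position (0-based) of v in sigma ordered increasingly *)
Definition pos (n : nat) (v : 'I_n) (sigma : {set 'I_n}) : nat :=
  #|[set x in sigma | x < v]|%N.

(* boundary of a single simplex: sum_i (-1)^(i-1) (sigma \ {s_i}) *)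
Definition bd_simplex (n : nat) (F : fieldType) (sigma : {set 'I_n}) : chain n F :=
  [ffun tau => \sum_(v in sigma)
     (if tau == sigma :\ v then (-1) ^+ pos v sigma else 0)].

Definition boundary (n : nat) (F : fieldType) (Z : chain n F) : chain n F :=
  [ffun tau => \sum_(sigma : {set 'I_n}) Z sigma * bd_simplex F sigma tau].

Definition is_dcycle (n d : nat) (F : fieldType) (Z : chain n F) : Prop :=
  is_dchain d Z /\ boundary Z = 0.

Definition simple_dcycle (n d : nat) (F : fieldType) (Z : chain n F) : Prop :=
  [/\ is_dcycle d Z, Z != 0 &
      forall Z' : chain n F, is_dcycle d Z' -> Supp Z' \subset Supp Z ->
        exists c : F, Z' = [ffun sigma => c * Z sigma]].

Definition facet_adj (n d : nat) (sigma tau : {set 'I_n}) : bool :=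
  (sigma != tau) &&
  [exists f : {set 'I_n}, [&& #|f| == d, f \subset sigma & f \subset tau]].

Definition induced_adj (n d : nat) (V : {set {set 'I_n}}) : rel {set 'I_n} :=
  fun sigma tau => [&& sigma \in V, tau \in V & facet_adj d sigma tau].

Definition components (n d : nat) (V : {set {set 'I_n}}) : {set {set {set 'I_n}}} :=
  [set [set tau in V | connect (induced_adj d V) sigma tau] | sigma in V].

From HB Require Import structures.
From mathcomp Require Import all_boot all_order all_algebra.
Set Implicit Arguments. Unset Strict Implicit. Unset Printing Implicit Defensive.
Import GRing.Theory.
Local Open Scope ring_scope.

(* For a component C of the facet graph with S deleted, let Z_C be the
   restriction of Z to C. Its boundary is a nonzero (d-1)-cycle, since
   otherwise Z_C would be a cycle supported in Supp Z, hence a multiple of Z,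
   hence zero as it vanishes on S. A nonzero (d-1)-cycle has at least d+1
   faces in its support. These faces are faces of simplices of S, and the
   boundaries of different components are disjoint, because a common face
   makes two facets adjacent. As S has at most s(d+1) faces, at most s
   components remain. *)

Lemma leq_card_bigcup (I T : finType) (A : {set I}) (G : I -> {set T}) :
  (#|\bigcup_(i in A) G i| <= \sum_(i in A) #|G i|)%N.
Proof.
elim/big_rec2: _ => [|i m U _ le_Um]; first by rewrite cards0.
by rewrite (leq_trans (leq_card_setU _ _).1) ?leq_add2l.
Qed.

Lemma leq_card_disjoint_family (I T : finType) (A : {set I}) (G : I -> {set T})
    (B : {set T}) (k : nat) :
  (0 < k)%N -> {in A, forall i, k <= #|G i|}%N -> {in A, forall i, G i \subset B} ->
  {in A &, forall i j, i != j -> [disjoint G i & G j]} ->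
  (#|A| * k <= #|B|)%N.
Proof.
move=> k_gt0 kG GB disjG.
have G_inj : {in A &, injective G}.
  move=> i j iA jA eqG; apply/eqP; apply: contraTT (kG i iA) => /(disjG i j iA jA).
  by rewrite -eqG -setI_eq0 setIid => /eqP ->; rewrite cards0 -ltnNge.
have trivG : trivIset (G @: A).
  apply/trivIsetP => _ _ /imsetP[i iA ->] /imsetP[j jA ->] neqG.
  by apply: disjG => //; apply: contraNneq neqG => ->.
have card_cover : #|cover (G @: A)| = (\sum_(X in G @: A) #|X|)%N.
  by apply/eqP; rewrite (leq_card_cover _).2.
rewrite -sum_nat_const (@leq_trans (\sum_(i in A) #|G i|)) ?leq_sum //.
rewrite -(big_imset (fun X : {set T} => #|X|) G_inj) /= -card_cover.
by apply: subset_leq_card; rewrite cover_imset; apply/bigcupsP.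
Qed.

Section Boundary.
Variables (F : fieldType) (n : nat).
Implicit Types (sigma tau rho : {set 'I_n}) (v w : 'I_n) (c : chain n F).

Definition faces sigma : {set {set 'I_n}} := [set sigma :\ v | v in sigma].

Definition restr (A : {set {set 'I_n}}) c : chain n F :=
  [ffun sigma => if sigma \in A then c sigma else 0].

Lemma pos_setD1_lt sigma v w : v \in sigma -> (v < w)%N ->
  pos w sigma = (pos w (sigma :\ v)).+1.
Proof.
move=> vs vw; rewrite /pos (cardsD1 v [set x in sigma | (x < w)%N]) inE vs vw add1n.
by congr _.+1; apply: eq_card => x; rewrite !inE; case: (x == v).
Qed.

Lemma pos_setD1_gt sigma v w : (w < v)%N -> pos w (sigma :\ v) = pos w sigma.
Proof.
move=> wv; rewrite /pos; apply: eq_card => x; rewrite !inE.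
by case: (eqVneq x v) => [->|] //=; rewrite ltnNge ltnW ?andbF.
Qed.

Lemma bd_simplex_setD1 sigma v : v \in sigma ->
  bd_simplex F sigma (sigma :\ v) = (-1) ^+ pos v sigma.
Proof.
move=> vs; rewrite ffunE (big_setD1 v) //= eqxx big1 ?addr0 // => w /setD1P[wv ws].
by rewrite ifN //; apply/eqP => /setP /(_ w); rewrite !inE eqxx ws wv.
Qed.

Lemma bd_simplex_neq0 sigma tau : bd_simplex F sigma tau != 0 -> tau \in faces sigma.
Proof.
rewrite ffunE; apply: contraR => tau_nface; rewrite big1 // => v vs.
by rewrite ifN //; apply: contraNneq tau_nface => ->; apply: imset_f.
Qed.

Lemma sum_bd_simplexM sigma (g : {set 'I_n} -> F) :
  \sum_rho bd_simplex F sigma rho * g rho =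
  \sum_(v in sigma) (-1) ^+ pos v sigma * g (sigma :\ v).
Proof.
under eq_bigr => rho _ do rewrite ffunE mulr_suml.
rewrite exchange_big; apply: eq_bigr => v _.
rewrite (bigD1 (sigma :\ v)) //= eqxx big1 ?addr0 // => rho /negbTE ->.
by rewrite mul0r.
Qed.

Lemma sum_antisym (V : zmodType) (A : {set 'I_n}) (G : 'I_n -> 'I_n -> V) :
  (forall v, G v v = 0) ->
  {in A &, forall v w, G w v = - G v w} ->
  \sum_(v in A) \sum_(w in A) G v w = 0.
Proof.
move=> G0 Ganti.
have splitG v w :
    G v w = (if (v < w)%N then G v w else 0) + (if (w < v)%N then G v w else 0).
  by case: ltngtP => [||/val_inj ->]; rewrite ?addr0 ?add0r ?G0 ?addr0.
under eq_bigr do under eq_bigr do rewrite splitG.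
under eq_bigr do rewrite big_split /=.
rewrite big_split /= [X in _ + X]exchange_big /= -big_split /=.
apply: big1 => v vA; rewrite -big_split /=; apply: big1 => w wA.
by case: ifP => _; rewrite ?addr0 // (Ganti v w) ?addrN.
Qed.

Lemma boundary_bd_simplex sigma : boundary (bd_simplex F sigma) = 0.
Proof.
apply/ffunP => tau; rewrite !ffunE sum_bd_simplexM.
pose G v w := if (w != v) && (tau == sigma :\ v :\ w)
   then (-1) ^+ (pos v sigma + pos w (sigma :\ v)) else 0 : F.
rewrite (eq_bigr (fun v => \sum_(w in sigma) G v w)); last first.
  move=> v vs; rewrite ffunE mulr_sumr (big_setD1 v vs) /= {1}/G eqxx /= add0r.
  apply: eq_bigr => w /setD1P[wv ws]; rewrite /G wv /=.
  by case: eqP; rewrite ?mulr0 // exprD.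
apply: sum_antisym => [v|v w vs ws]; first by rewrite /G eqxx.
rewrite /G eq_sym; case: (eqVneq v w) => [->|wv] /=; first by rewrite oppr0.
rewrite [sigma :\ w :\ v]setDDl setUC -setDDl.
case: eqP => _; last by rewrite oppr0.
(* each face of codimension two appears twice, with the signs of the two
   orders in which its missing vertices can be removed *)
case: (ltngtP v w) => [lt_vw|lt_wv|/val_inj eq_vw]; last by rewrite eq_vw eqxx in wv.
- rewrite (pos_setD1_gt sigma lt_vw) (pos_setD1_lt vs lt_vw).
  by rewrite addSn exprS mulN1r addnC.
- rewrite (pos_setD1_gt sigma lt_wv) (pos_setD1_lt ws lt_wv).
  by rewrite addSn exprS mulN1r opprK addnC.
Qed.

Lemma boundary_boundary c : boundary (boundary c) = 0.
Proof.
apply/ffunP => tau; rewrite !ffunE.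
under eq_bigr do rewrite ffunE mulr_suml.
rewrite exchange_big; apply: big1 => sigma _.
under eq_bigr do rewrite -mulrA.
have /(congr1 (fun b : chain n F => b tau)) := boundary_bd_simplex sigma.
by rewrite -mulr_sumr !ffunE => ->; rewrite mulr0.
Qed.

Lemma boundary_neq0 c tau : boundary c tau != 0 ->
  exists2 sigma, c sigma != 0 & tau \in faces sigma.
Proof.
rewrite ffunE => bc_tau.
have [sigma /andP[c_sigma /bd_simplex_neq0 face_tau] | none] :=
  pickP [pred sigma | (c sigma != 0) && (bd_simplex F sigma tau != 0)].
  by exists sigma.
case/negP: bc_tau; rewrite big1 // => sigma _; move/negbT: (none sigma).
by rewrite negb_and !negbK => /orP[] /eqP ->; rewrite ?mul0r ?mulr0.
Qed.

Lemma card_faces sigma tau (d : nat) :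
  #|sigma| = d.+1 -> tau \in faces sigma -> #|tau| = d.
Proof.
move=> card_sigma /imsetP[v vs ->].
by move: card_sigma; rewrite (cardsD1 v) vs => -[].
Qed.

Lemma dchain_boundary d c : is_dchain d.+1 c -> is_dchain d (boundary c).
Proof. by move=> dc tau /boundary_neq0[sigma /dc /card_faces]; apply. Qed.

Lemma cycle_cofacet c f v : boundary c = 0 -> c f != 0 -> v \in f ->
  exists g, [&& c g != 0, g != f & f :\ v \subset g].
Proof.
move=> bc cf vf; have /(congr1 (fun b : chain n F => b (f :\ v))) := bc.
rewrite !ffunE (bigD1 f) //= bd_simplex_setD1 //.
have [g Pg|none] := pickP [pred g | [&& c g != 0, g != f & f :\ v \subset g]].
  by exists g.
rewrite big1 ?addr0 => [/eqP|g gf]; first by rewrite mulf_eq0 signr_eq0 (negbTE cf).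
have [->|cg] := eqVneq (c g) 0; first by rewrite mul0r.
have [->|/bd_simplex_neq0 /imsetP[w _ eq_face]] := eqVneq (bd_simplex F g (f :\ v)) 0.
  by rewrite mulr0.
by move: (none g); rewrite /= cg gf eq_face subsetDl.
Qed.

(* Removing the different vertices of a facet f of a nonzero cycle yields
   different faces, each of which lies on a second facet; these d+1 facets
   are pairwise distinct, as two of them would contain all of f. *)
Lemma card_Supp_cycle d c : is_dchain d c -> boundary c = 0 -> c != 0 ->
  (d.+2 <= #|Supp c|)%N.
Proof.
move=> dc bc c_neq0.
have [f cf] : exists f, c f != 0.
  apply/existsP; apply: contraNT c_neq0 => /existsPn c0.
  by apply/eqP/ffunP => f; rewrite ffunE; apply/eqP/negbNE/c0.
pose cof v := odflt f [pick g | [&& c g != 0, g != f & f :\ v \subset g]].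
have cofP v : v \in f -> [&& c (cof v) != 0, cof v != f & f :\ v \subset cof v].
  move=> /(cycle_cofacet bc cf) [g Pg]; rewrite /cof.
  by case: pickP => [//|none]; move: (none g); rewrite Pg.
have cof_inj : {in f &, injective cof}.
  move=> u v uf vf eq_cof; apply/eqP; apply: contraTT (cofP u uf) => neq_uv.
  have /and3P[_ _ sub_v] := cofP v vf; rewrite -eq_cof in sub_v.
  apply/and3P => -[cu nfu sub_u]; move: nfu; rewrite eq_sym eqEcard.
  have -> : f \subset cof u.
    apply/subsetP => x xf; have [->|xu] := eqVneq x u.
      by apply: (subsetP sub_v); rewrite !inE neq_uv uf.
    by apply: (subsetP sub_u); rewrite !inE xu xf.
  by rewrite (dc _ cu) (dc _ cf) leqnn.
have : (#|cof @: f| <= #|Supp c :\ f|)%N.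
  apply/subset_leq_card/subsetP => g /imsetP[v vf ->].
  by have /and3P[cg gf _] := cofP v vf; rewrite !inE gf cg.
by rewrite card_in_imset // (dc _ cf) (cardsD1 f (Supp c)) inE cf add1n.
Qed.

Lemma restrE A c sigma : restr A c sigma = if sigma \in A then c sigma else 0.
Proof. by rewrite ffunE. Qed.

Lemma dchain_restr d A c : is_dchain d c -> is_dchain d (restr A c).
Proof.
by move=> dc sigma; rewrite restrE; case: ifP => _; [apply: dc | rewrite eqxx].
Qed.

Lemma Supp_restr A c : Supp (restr A c) = A :&: Supp c.
Proof. by apply/setP => sigma; rewrite !inE restrE; case: ifP; rewrite ?eqxx. Qed.

Lemma boundary_restrC A c tau :
  boundary (restr A c) tau + boundary (restr (~: A) c) tau = boundary c tau.
Proof.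
rewrite !ffunE -big_split; apply: eq_bigr => sigma _.
by rewrite !restrE inE; case: (sigma \in A); rewrite /= mul0r ?addr0 ?add0r.
Qed.

End Boundary.

Section Components.
Variables (n d : nat) (V : {set {set 'I_n}}).
Implicit Types (sigma tau : {set 'I_n}) (C : {set {set 'I_n}}).

Lemma facet_adj_sym : symmetric (@facet_adj n d).
Proof.
move=> sigma tau; rewrite /facet_adj eq_sym; congr (_ && _).
by apply/existsP/existsP => -[f /and3P[? ? ?]]; exists f; apply/and3P.
Qed.

Lemma connect_induced_adj_sym : connect_sym (induced_adj d V).
Proof.
apply: sym_connect_sym => sigma tau.
by rewrite /induced_adj facet_adj_sym andbCA.
Qed.

Lemma componentsP C : C \in components d V ->
  exists2 rho, rho \in V & C = [set tau in V | connect (induced_adj d V) rho tau].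
Proof. by case/imsetP => rho rV ->; exists rho. Qed.

Lemma components_sub C : C \in components d V -> C \subset V.
Proof.
by case/componentsP => rho _ ->; apply/subsetP => tau; rewrite inE => /andP[].
Qed.

Lemma components_neq0 C : C \in components d V -> C != set0.
Proof.
by case/componentsP => rho rV ->; apply/set0Pn; exists rho; rewrite inE rV connect0.
Qed.

Lemma component_closed C sigma tau : C \in components d V ->
  sigma \in C -> tau \in V -> facet_adj d sigma tau -> tau \in C.
Proof.
move=> CV sC tV adj; have sV := subsetP (components_sub CV) _ sC.
move: sC; case/componentsP: CV => rho _ ->; rewrite !inE tV => /andP[_ r_s].
by apply: connect_trans r_s (connect1 _); rewrite /induced_adj sV tV adj.
Qed.

Lemma component_eq C C' sigma : C \in components d V -> C' \in components d V ->
  sigma \in C -> sigma \in C' -> C = C'.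
Proof.
case/componentsP => rho _ ->; case/componentsP => rho' _ ->; rewrite !inE.
move=> /andP[_ r_s] /andP[_ r'_s].
have r_r' : connect (induced_adj d V) rho rho'.
  by apply: connect_trans r_s _; rewrite connect_induced_adj_sym.
apply/setP => tau; rewrite !inE; case: (tau \in V) => //=.
apply/idP/idP => [|/(connect_trans r_r') //].
by apply: connect_trans; rewrite connect_induced_adj_sym.
Qed.

End Components.

Section ComponentBoundaries.
Variables (F : fieldType) (n d : nat) (Z : chain n F) (S : {set {set 'I_n}}).
Hypothesis dZ : is_dchain d Z.
Implicit Types (sigma tau : {set 'I_n}) (C : {set {set 'I_n}}).

Let V := Supp Z :\: S.

Lemma facet_adj_faces sigma tau rho : sigma != tau -> Z sigma != 0 ->
  rho \in faces sigma -> rho \in faces tau -> facet_adj d sigma tau.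
Proof.
move=> neq_st Zs rs rt; rewrite /facet_adj neq_st; apply/existsP; exists rho.
rewrite (card_faces (dZ Zs) rs) eqxx /=.
case/imsetP: rs => v _ rE; case/imsetP: rt => w _ rE'.
by rewrite {1}rE rE' !subsetDl.
Qed.

Lemma restr_component_facet C t : C \in components d V ->
  t \in Supp (boundary (restr C Z)) -> exists2 sigma, sigma \in C & t \in faces sigma.
Proof.
move=> CV; rewrite inE => /boundary_neq0[sigma]; rewrite restrE.
by case: ifP => [sC _|_]; [exists sigma | rewrite eqxx].
Qed.

Lemma disjoint_boundary_components C C' :
  C \in components d V -> C' \in components d V -> C != C' ->
  [disjoint Supp (boundary (restr C Z)) & Supp (boundary (restr C' Z))].
Proof.
move=> CV C'V neqC; apply/pred0P => t /=; apply/negbTE/andP => -[tC tC'].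
have [sigma sC ts] := restr_component_facet CV tC.
have [tau tC'' tt] := restr_component_facet C'V tC'.
have Zs : Z sigma != 0.
  by move: (subsetP (components_sub CV) _ sC); rewrite !inE => /andP[].
have tV := subsetP (components_sub C'V) _ tC''.
case/eqP: neqC; have [eq_st|neq_st] := eqVneq sigma tau.
  by apply: (component_eq CV C'V sC); rewrite eq_st.
apply: (component_eq CV C'V _ tC'').
exact: component_closed CV sC tV (facet_adj_faces neq_st Zs ts tt).
Qed.

(* As [boundary Z = 0], a boundary face of [restr C Z] also lies on a facet
   outside [C]; that facet is adjacent to [C], so it must be a deleted one. *)
Lemma boundary_component_sub_faces C : boundary Z = 0 -> C \in components d V ->
  Supp (boundary (restr C Z)) \subset \bigcup_(sigma in S) faces sigma.
Proof.
move=> bZ CV; apply/subsetP => t tC.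
have [sigma sC ts] := restr_component_facet CV tC.
have : boundary (restr (~: C) Z) t != 0.
  move: tC; rewrite inE; apply: contra => /eqP bCt.
  by have := boundary_restrC C Z t; rewrite bCt addr0 bZ => ->; rewrite ffunE.
case/boundary_neq0 => tau; rewrite restrE inE.
case: ifP => [tnC Zt tt|_]; last by rewrite eqxx.
have sV := subsetP (components_sub CV) _ sC.
have Zs : Z sigma != 0 by move: sV; rewrite !inE => /andP[].
have neq_st : sigma != tau by apply: contraNneq tnC => <-.
apply/bigcupP; exists tau => //; apply: contraNT tnC => tnS.
have tV : tau \in V by rewrite !inE tnS Zt.
exact: component_closed CV sC tV (facet_adj_faces neq_st Zs ts tt).
Qed.

End ComponentBoundaries.

Lemma boundary_restr_component_neq0 (F : fieldType) (n d : nat) (Z : chain n F)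
    (S : {set {set 'I_n}}) (C : {set {set 'I_n}}) :
  simple_dcycle d Z -> S \subset Supp Z -> S != set0 ->
  C \in components d (Supp Z :\: S) -> boundary (restr C Z) != 0.
Proof.
move=> [[dZ _] _ simpleZ] SZ /set0Pn[sigma sS] CV; apply/eqP => bC0.
have CSZ := components_sub CV.
have [c restrC] : exists c : F, restr C Z = [ffun tau => c * Z tau].
  apply: simpleZ; first by split; [apply: dchain_restr|].
  by rewrite Supp_restr subsetIr.
have Zs : Z sigma != 0 by move: (subsetP SZ _ sS); rewrite inE.
have sC : sigma \notin C.
  by apply: contraL sS => /(subsetP CSZ); rewrite !inE => /andP[].
have /(congr1 (fun b : chain n F => b sigma)) := restrC.
rewrite restrE (negbTE sC) ffunE => /esym/eqP; rewrite mulf_eq0 (negbTE Zs) orbF.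
move=> /eqP c0; have /set0Pn[tau tC] := components_neq0 CV.
have /(congr1 (fun b : chain n F => b tau)) := restrC.
rewrite restrE tC ffunE c0 mul0r => /eqP.
by move: (subsetP CSZ _ tC); rewrite !inE => /andP[_] /negbTE ->.
Qed.

Theorem theorem5p5 (F : fieldType) (n d s : nat) (Z : chain n F) :
  (1 <= d)%N -> simple_dcycle d Z -> (1 <= s)%N ->
  forall S : {set {set 'I_n}}, S \subset Supp Z -> #|S| = s ->
    (#|components d (Supp Z :\: S)| <= s)%N.
Proof.
case: d => [//|d] _ simpleZ s_gt0 S SZ card_S.
have [[dZ bZ] _ _] := simpleZ.
have S_neq0 : S != set0 by rewrite -card_gt0 card_S.
rewrite -(leq_pmul2r (ltn0Sn d.+1)).
apply: (@leq_trans #|\bigcup_(sigma in S) faces sigma|).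
  apply: (@leq_card_disjoint_family _ _ _ (fun C => Supp (boundary (restr C Z))))
    => // [C CV|C CV|C C' CV C'V].
  - apply: card_Supp_cycle; first by apply: dchain_boundary; apply: dchain_restr.
      exact: boundary_boundary.
    exact: boundary_restr_component_neq0 CV.
  - exact: boundary_component_sub_faces dZ C bZ CV.
  - exact: disjoint_boundary_components dZ C C' CV C'V.
rewrite -card_S (leq_trans (leq_card_bigcup _ _)) // -sum_nat_const.
apply: leq_sum => sigma sS; rewrite (leq_trans (leq_imset_card _ _)) // dZ //.
by move: (subsetP SZ _ sS); rewrite inE.
Qed.
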